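(* Let $X$ be a Banach algebra. Let $\phi,\psi:X^2\to[0,\infty)$ and $f:X\to X$ with $f(0)=0$ satisfy $$\|f(xyx)-f(x)yx-xf(y)x-xyf(x)\|\le\psi(x,y),$$ $$\|f(2x+y)+f(x+2y)-f(3x)-f(3y)\|\le\phi(x,y)$$ for all $x,y\in X$. Assume there exists $0<L<1$ such that for all $x,y\in X$ $$\tfrac12\phi(2x,2y)\le L\phi(x,y),\qquad \lim_{k\to\infty}8^{-k}\psi(2^kx,2^ky)=0.$$ Then there exists a unique Jordan triple derivation $H:X\to X$ such that $$\|f(x)-H(x)\|\le\frac{1}{2-2L}\Phi(x)\quad\text{for all }x\in X,$$ where $\Phi(x)=\phi(\tfrac x2,0)+\phi(-\tfrac x2,0)+\phi(\tfrac x2,-\tfrac x2)+\phi(-\tfrac x3,\tfrac{2x}{3})$.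
   Context: A Jordan triple derivation on an algebra $X$ is an additive map $D:X\to X$ with $D(xyx)=D(x)yx+xD(y)x+xyD(x)$ for all $x,y\in X$. *)

From HB Require Import structures.
From mathcomp Require Import all_boot all_order all_algebra.
From mathcomp Require Import all_classical all_reals all_analysis.
Set Implicit Arguments. Unset Strict Implicit. Unset Printing Implicit Defensive.
Import Order.TTheory GRing.Theory Num.Theory.
Import numFieldNormedType.Exports.
Local Open Scope ring_scope.

Definition banach_algebra_mul (R : realType) (V : completeNormedModType R)
  (mul : V -> V -> V) : Prop :=
  (forall x y z, mul (mul x y) z = mul x (mul y z)) /\
  (forall x y z, mul (x + y) z = mul x z + mul y z) /\
  (forall x y z, mul x (y + z) = mul x y + mul x z) /\
  (forall (a : R) x y, mul (a *: x) y = a *: mul x y) /\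
  (forall (a : R) x y, mul x (a *: y) = a *: mul x y) /\
  (forall x y, `|mul x y| <= `|x| * `|y|).

Definition jordan_triple_derivation (R : realType) (V : completeNormedModType R)
  (mul : V -> V -> V) (D : V -> V) : Prop :=
  (forall x y, D (x + y) = D x + D y) /\
  (forall x y, D (mul (mul x y) x) =
     mul (mul (D x) y) x + mul (mul x (D y)) x + mul (mul x y) (D x)).

From HB Require Import structures.
From mathcomp Require Import all_boot all_order all_algebra.
From mathcomp Require Import all_classical all_reals all_analysis.
From mathcomp Require Import ring lra.
Import Order.TTheory GRing.Theory Num.Theory.
Import numFieldNormedType.Exports.
Local Open Scope classical_set_scope.
Local Open Scope ring_scope.

(* Hyers' direct method.  Substituting (x/2, 0), (-x/2, 0), (x/2, -x/2) and
   (-x/3, 2x/3) in the functional inequality bounds |f (2x) - 2 f x| by Phi x,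
   and Phi (2x) <= 2L Phi x, so h_n x = 2^-n f (2^n x) moves by at most
   2^-1 L^n Phi x at step n: it converges to some H with
   |f x - H x| <= Phi x / (2 - 2L).  H satisfies the functional equation
   exactly and H (2x) = 2 H x, which forces H to be additive.  Since
   h_(3k) (xyx) = 8^-k f ((2^k x) (2^k y) (2^k x)), the Jordan defect of H is
   the limit of quantities bounded by 8^-k psi (2^k x, 2^k y), hence zero.
   Two additive maps within Phi / (2 - 2L) of f differ at x by 2^-n times their
   difference at 2^n x, which is O(L^n). *)

Section NormedSequences.
Context {R : realType}.

Lemma cvg_dist_null {V : normedModType R} [u : nat -> V] [l : V] [b : nat -> R] :
  (forall n, `|l - u n| <= b n) -> b @ \oo --> 0 -> u @ \oo --> l.
Proof.
move=> ub /cvgr0_norm_lt b0; apply/cvgrPdist_lt => e /b0.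
by apply: filterS => n bn; exact: le_lt_trans (ub n) (le_lt_trans (ler_norm _) bn).
Qed.

Lemma lim_norm_le_null {V : normedModType R} [u : nat -> V] [l : V] [b : nat -> R] :
  u @ \oo --> l -> (forall n, `|u n| <= b n) -> b @ \oo --> 0 -> l = 0.
Proof.
move=> ul ub b0.
have u0 : u @ \oo --> 0 by apply: cvg_dist_null b0 => n; rewrite sub0r normrN.
exact: (cvg_unique _ ul u0).
Qed.

Lemma lim_dist_le {V : normedModType R} [u : nat -> V] [l a : V] [c : R] :
  u @ \oo --> l -> (forall n, `|a - u n| <= c) -> `|a - l| <= c.
Proof.
move=> ul ub; have al : (fun n => `|a - u n|) @ \oo --> `|a - l|.
  by apply: cvg_norm; apply: cvgB => //; exact: cvg_cst.
rewrite -(cvg_lim _ al) //; apply: limr_le; last exact: nearW.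
by apply/cvg_ex; exists `|a - l|.
Qed.

Lemma cvg_subseq {V : normedModType R} [u : nat -> V] [s : nat -> nat] [l : V] :
  (forall n, (n <= s n)%N) -> u @ \oo --> l -> (fun n => u (s n)) @ \oo --> l.
Proof.
move=> s_ge /cvgrPdist_lt ul; apply/cvgrPdist_lt => e /ul [N _ uN].
by exists N => // n /= Nn; apply: uN; exact: leq_trans Nn (s_ge n).
Qed.

Lemma cvg_bounded_additive {V W : normedModType R} [g : V -> W] [K : R]
    [u : nat -> V] [l : V] :
  {morph g : a b / a - b} -> (forall a, `|g a| <= K * `|a|) ->
  u @ \oo --> l -> (fun n => g (u n)) @ \oo --> g l.
Proof.
move=> gB gK ul; apply: (cvg_dist_null (b := fun n => K * `|l - u n|)).
  by move=> n; rewrite -gB.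
have dist0 : (fun n => `|l - u n|) @ \oo --> 0.
  rewrite -(normr0 V) -(subrr l); apply: cvg_norm.
  by apply: cvgB => //; exact: cvg_cst.
by rewrite -(mulr0 K); apply: cvgM => //; exact: cvg_cst.
Qed.

End NormedSequences.

Section GeometricCauchy.
Context {R : realType} {X : completeNormedModType R} {u : nat -> X} {c L : R}.
Hypotheses (L_ge0 : 0 <= L) (L_lt1 : L < 1)
  (u_step : forall n, `|u n.+1 - u n| <= c * L ^+ n).

Lemma dist_geometric_le n k : `|u (n + k)%N - u n| <= c / (1 - L) * L ^+ n.
Proof.
have c_ge0 : 0 <= c.
  by apply: le_trans (normr_ge0 _) (le_trans (u_step 0) _); rewrite expr0 mulr1.
have Lk_ge0 m : 0 <= L ^+ m by exact: exprn_ge0.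
suff bound : `|u (n + k)%N - u n| <= c / (1 - L) * L ^+ n * (1 - L ^+ k).
  apply: le_trans bound _; apply: ler_piMr; last by have := Lk_ge0 k; lra.
  by rewrite mulr_ge0 ?divr_ge0 // subr_ge0 ltW.
elim: k => [|k IH]; first by rewrite addn0 subrr normr0 expr0 subrr mulr0.
rewrite addnS -[u _ - _](subrKA (u (n + k))).
apply: le_trans (ler_normD _ _) (le_trans (lerD (u_step _) IH) _).
rewrite le_eqVlt exprD exprS; apply/orP; left; apply/eqP; field.
by rewrite subr_eq0 gt_eqF.
Qed.

Lemma geometric_cauchy_cvg : cvgn u.
Proof.
apply: cauchy_cvg; apply: cauchy_exP => e e0.
have : (fun n => c / (1 - L) * L ^+ n) @ \oo --> 0.
  rewrite -(mulr0 (c / (1 - L))); apply: cvgM; first exact: cvg_cst.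
  by apply: cvg_expr; rewrite ger0_norm.
move=> /cvgrPdist_lt /(_ e e0) [N _ uN]; exists (u N), N => // m /= Nm.
rewrite -ball_normE /ball_ /= -(subnKC Nm) distrC.
apply: le_lt_trans (dist_geometric_le _ _) (le_lt_trans (ler_norm _) _).
by have := uN N (leqnn N); rewrite /= sub0r normrN.
Qed.

Lemma geometric_lim_dist_le : `|u 0 - limn u| <= c / (1 - L).
Proof.
have ul : u @ \oo --> limn u := geometric_cauchy_cvg.
apply: (lim_dist_le ul) => k.
by have := dist_geometric_le 0 k; rewrite add0n expr0 mulr1 distrC.
Qed.

End GeometricCauchy.

Lemma pow2_neq0 {R : numFieldType} n : (2 ^+ n : R) != 0.
Proof. by rewrite expf_neq0 ?pnatr_eq0. Qed.

Section AdditiveEquation.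
Context {R : numFieldType} {V : lmodType R}.

Definition eqn_defect (g : V -> V) (x y : V) : V :=
  g (2 *: x + y) + g (x + 2 *: y) - g (3 *: x) - g (3 *: y).

Lemma scale2E (v : V) : 2 *: v = v + v.
Proof. by rewrite scaler_nat mulr2n. Qed.

Lemma additive_scale2n {W : lmodType R} [g : V -> W] :
  {morph g : a b / a + b} -> forall n x, g (2 ^+ n *: x) = 2 ^+ n *: g x.
Proof.
move=> gD; elim=> [|n IH] x; first by rewrite expr0 !scale1r.
by rewrite exprS -!scalerA !scaler_nat !mulr2n gD IH.
Qed.

Lemma eq_scale_eq0 [c : R] [v : V] : c != 1 -> v = c *: v -> v = 0.
Proof.
move=> c1 /eqP; rewrite eq_sym -subr_eq0 -{2}[v]scale1r -scalerBl scaler_eq0.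
by rewrite subr_eq0 (negPf c1) => /eqP.
Qed.

Variable g : V -> V.
Hypotheses (g0 : g 0 = 0) (g_double : forall x, g (2 *: x) = 2 *: g x)
  (g_defect0 : forall x y, eqn_defect g x y = 0).

Lemma defect0_scale3 x : g (3 *: x) = 3 *: g x.
Proof.
have /eqP := g_defect0 x 0.
rewrite /eqn_defect !(addr0, scaler0) g0 subr0 subr_eq0 g_double => /eqP <-.
by rewrite [RHS]scaler_nat [in RHS]mulrSr scaler_nat.
Qed.

Lemma defect0_odd x : g (- x) = - g x.
Proof.
have := g_defect0 x (- x); rewrite /eqn_defect !defect0_scale3.
rewrite !scale2E addrK addrA subrr add0r -addrA -opprD -scalerDr => /eqP.
rewrite subr_eq0 => /eqP E.
have /eqP : g x + g (- x) = 0 by apply: (eq_scale_eq0 _ E); rewrite pnatr_eq1.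
by rewrite addrC addr_eq0 => /eqP.
Qed.

Lemma defect0_add2 a b : g (2 *: a + b) = 2 *: g a + g b.
Proof.
have n3 : (3 : R) != 0 by rewrite pnatr_eq0.
pose x0 := (2 / 3) *: a + 3^-1 *: b.
pose y0 := - 3^-1 *: a + - (2 / 3) *: b.
have e1 : 2 *: x0 + y0 = a.
  rewrite -[RHS]addr0 -[a in RHS]scale1r -(scale0r b) scalerDr !scalerA.
  by rewrite addrACA -!scalerDl; congr (_ *: _ + _ *: _); field.
have e2 : x0 + 2 *: y0 = - b.
  rewrite -[RHS]add0r -(scale0r a) -scaleN1r scalerDr !scalerA.
  by rewrite addrACA -!scalerDl; congr (_ *: _ + _ *: _); field.
have e3 : 3 *: x0 = 2 *: a + b.
  by rewrite -[b in RHS]scale1r scalerDr !scalerA; congr (_ *: _ + _ *: _); field.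
have e4 : 3 *: y0 = - (a + 2 *: b).
  rewrite opprD -[a in RHS]scale1r -!scaleNr scalerDr !scalerA.
  by congr (_ *: _ + _ *: _); field.
have D1 : g (2 *: a + b) - g (a + 2 *: b) = g a - g b.
  have /eqP := g_defect0 x0 y0; rewrite /eqn_defect e1 e2 e3 e4 !defect0_odd.
  rewrite opprK -addrA [- _ + _]addrC -(opprB (g (2 *: a + b))) subr_eq0.
  by move=> /eqP ->.
have D2 : g (2 *: a + b) + g (a + 2 *: b) = 3 *: g a + 3 *: g b.
  have /eqP := g_defect0 a b; rewrite /eqn_defect !defect0_scale3.
  by rewrite -addrA -opprD subr_eq0 => /eqP.
apply: (scalerI (_ : (2 : R) != 0)); first by rewrite pnatr_eq0.
have -> : 2 *: g (2 *: a + b) = (g (2 *: a + b) - g (a + 2 *: b))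
                               + (g (2 *: a + b) + g (a + 2 *: b)).
  by rewrite addrACA addNr addr0 scale2E.
rewrite D1 D2.
by rewrite !scaler_nat mulrnDl -mulrnA addrACA -mulrS [g b *+ 3]mulrS addKr.
Qed.

Lemma defect0_additive : {morph g : a b / a + b}.
Proof.
move=> a b; have -> : a = 2 *: (2^-1 *: a) by rewrite scalerA mulfV ?scale1r ?pnatr_eq0.
by rewrite defect0_add2 g_double.
Qed.

End AdditiveEquation.

Lemma additive_eq_of_dist_le {R : realType} {V : normedModType R}
    [A B : V -> V] [K : V -> R] [L : R] :
  {morph A : a b / a + b} -> {morph B : a b / a + b} -> 0 <= L -> L < 1 ->
  (forall x, `|A x - B x| <= K x) ->
  (forall n x, K (2 ^+ n *: x) <= (2 * L) ^+ n * K x) -> A = B.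
Proof.
move=> AD BD L_ge0 L_lt1 AB K2n; apply/funext => x; apply/eqP; rewrite -subr_eq0.
apply/eqP; apply: (lim_norm_le_null (cvg_cst (A x - B x)) (b := fun n => K x * L ^+ n)).
  move=> n; have -> : A x - B x = (2 ^+ n)^-1 *: (A (2 ^+ n *: x) - B (2 ^+ n *: x)).
    rewrite (additive_scale2n AD) (additive_scale2n BD) -scalerBr scalerA.
    by rewrite mulVf ?scale1r ?pow2_neq0.
  rewrite normrZ ger0_norm ?invr_ge0 ?exprn_ge0 //.
  apply: le_trans (ler_wpM2l _ (le_trans (AB _) (K2n n x))) _.
    by rewrite invr_ge0 exprn_ge0.
  by rewrite exprMn -mulrA (mulKf (pow2_neq0 n)) mulrC.
rewrite -(mulr0 (K x)); apply: cvgM; first exact: cvg_cst.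
by apply: cvg_expr; rewrite ger0_norm.
Qed.

Definition jordan_defect {R : realType} {X : completeNormedModType R}
    (mul : X -> X -> X) (D : X -> X) (x y : X) : X :=
  D (mul (mul x y) x) - mul (mul (D x) y) x - mul (mul x (D y)) x
  - mul (mul x y) (D x).

Section BanachAlgebra.
Context {R : realType} {X : completeNormedModType R} {mul : X -> X -> X}.

Hypothesis mulP : banach_algebra_mul mul.

Lemma mulBl u v w : mul (u - v) w = mul u w - mul v w.
Proof.
have [_ [mulDl [_ [mulZl _]]]] := mulP.
by rewrite mulDl -scaleN1r mulZl scaleN1r.
Qed.

Lemma mulBr u v w : mul w (u - v) = mul w u - mul w v.
Proof.
have [_ [_ [mulDr [_ [mulZr _]]]]] := mulP.
by rewrite mulDr -scaleN1r mulZr scaleN1r.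
Qed.

Lemma cvg_mull (u : nat -> X) (l a : X) :
  u @ \oo --> l -> (fun n => mul (u n) a) @ \oo --> mul l a.
Proof.
have [_ [_ [_ [_ [_ mul_le]]]]] := mulP.
apply: (cvg_bounded_additive (g := mul^~ a) (K := `|a|)) => [b c|b].
  exact: mulBl.
by rewrite mulrC mul_le.
Qed.

Lemma cvg_mulr (u : nat -> X) (l a : X) :
  u @ \oo --> l -> (fun n => mul a (u n)) @ \oo --> mul a l.
Proof.
have [_ [_ [_ [_ [_ mul_le]]]]] := mulP.
apply: (cvg_bounded_additive (g := mul a) (K := `|a|)) => [b c|b].
  exact: mulBr.
exact: mul_le.
Qed.

Lemma jordan_defect_rescale (D : X -> X) (t : R) (x y : X) : t != 0 ->
  (t ^+ 3)^-1 *: D (t ^+ 3 *: mul (mul x y) x)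
  - mul (mul (t^-1 *: D (t *: x)) y) x - mul (mul x (t^-1 *: D (t *: y))) x
  - mul (mul x y) (t^-1 *: D (t *: x))
  = (t ^+ 3)^-1 *: jordan_defect mul D (t *: x) (t *: y).
Proof.
have [_ [_ [_ [mulZl [mulZr _]]]]] := mulP.
move=> t0; have t3 : t ^+ 3 = t * (t * t) by rewrite !exprS expr0 mulr1.
rewrite /jordan_defect !scalerBr !(mulZl, mulZr) !scalerA t3.
congr (_ - _ - _ - _); first by rewrite mulrA.
all: by congr (_ *: _); field.
Qed.

End BanachAlgebra.

Definition Phi {R : realType} {X : completeNormedModType R}
    (phi : X -> X -> R) (x : X) : R :=
  phi (2^-1 *: x) 0 + phi (- 2^-1 *: x) 0 + phi (2^-1 *: x) (- 2^-1 *: x)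
  + phi (- 3^-1 *: x) ((2 / 3) *: x).

Definition hyers_seq {R : realType} {X : completeNormedModType R}
    (f : X -> X) (n : nat) (x : X) : X :=
  (2 ^+ n)^-1 *: f (2 ^+ n *: x).

Definition hyers_lim {R : realType} {X : completeNormedModType R}
    (f : X -> X) (x : X) : X :=
  limn (hyers_seq f ^~ x).

Section HyersApproximation.
Context {R : realType} {X : completeNormedModType R}.
Context {mul : X -> X -> X} {phi psi : X -> X -> R} {f : X -> X} {L : R}.
Hypotheses (f0 : f 0 = 0) (L_ge0 : 0 <= L) (L_lt1 : L < 1)
  (f_eqn : forall x y, `|eqn_defect f x y| <= phi x y)
  (phi_double : forall x y, 2^-1 * phi (2 *: x) (2 *: y) <= L * phi x y).

Lemma phi_scale2n n x y : phi (2 ^+ n *: x) (2 ^+ n *: y) <= (2 * L) ^+ n * phi x y.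
Proof.
elim: n => [|n IH]; first by rewrite expr0 !scale1r mul1r.
rewrite !exprS -!scalerA -mulrA; apply: le_trans (ler_wpM2l _ IH).
  by have := phi_double (2 ^+ n *: x) (2 ^+ n *: y); lra.
by rewrite mulr_ge0.
Qed.

Lemma Phi_scale2n n x : Phi phi (2 ^+ n *: x) <= (2 * L) ^+ n * Phi phi x.
Proof.
have comm c : c *: (2 ^+ n *: x) = 2 ^+ n *: (c *: x) by rewrite !scalerA mulrC.
rewrite /Phi !comm -{1 2}(scaler0 _ (2 ^+ n)) !mulrDr.
by rewrite !lerD ?phi_scale2n.
Qed.

Lemma f_double_dist_le x : `|f (2 *: x) - 2 *: f x| <= Phi phi x.
Proof.
pose u := 2^-1 *: x; pose v := - 2^-1 *: x.
pose w := - 3^-1 *: x; pose z := (2 / 3) *: x.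
have two0 : (2 : R) != 0 by rewrite pnatr_eq0.
have three0 : (3 : R) != 0 by rewrite pnatr_eq0.
have half_sum :
    eqn_defect f u 0 + eqn_defect f v 0 - eqn_defect f u v = f x + f (- x).
  rewrite /eqn_defect.
  have -> : 2 *: u + v = u by rewrite !scalerA -scalerDl; congr (_ *: _); field.
  have -> : u + 2 *: v = v by rewrite !scalerA -scalerDl; congr (_ *: _); field.
  have -> : 2 *: u = x by rewrite scalerA mulfV ?scale1r.
  have -> : 2 *: v = - x by rewrite scalerA mulrN mulfV ?scaleN1r.
  rewrite !(addr0, scaler0) f0 !subr0.
  rewrite -[f x + _ - _]addrA -[f (- x) + _ - _]addrA addrACA.
  have -> : f u + f v - f (3 *: u) - f (3 *: v)
      = (f u - f (3 *: u)) + (f v - f (3 *: v)) by rewrite addrACA addrA.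
  exact: addrK.
have third : eqn_defect f w z = f x - f (- x) - f (2 *: x).
  rewrite /eqn_defect.
  have -> : 2 *: w + z = 0.
    by rewrite scalerA -scalerDl -(scale0r x); congr (_ *: _); field.
  have -> : w + 2 *: z = x.
    by rewrite /w scalerA -scalerDl -[RHS]scale1r; congr (_ *: _); field.
  have -> : 3 *: w = - x by rewrite scalerA -[RHS]scaleN1r; congr (_ *: _); field.
  have -> : 3 *: z = 2 *: x by rewrite scalerA; congr (_ *: _); field.
  by rewrite f0 add0r.
have -> : f (2 *: x) - 2 *: f x
    = - (eqn_defect f u 0 + eqn_defect f v 0 - eqn_defect f u v + eqn_defect f w z).
  by rewrite half_sum third addrA addrACA subrr addr0 opprB [2 *: f x]scale2E.
rewrite normrN /Phi; apply: le_trans (ler_normD _ _) (lerD _ (f_eqn _ _)).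
apply: le_trans (ler_normB _ _) (lerD _ (f_eqn _ _)).
exact: le_trans (ler_normD _ _) (lerD (f_eqn _ _) (f_eqn _ _)).
Qed.

Lemma hyers_seq_step n x :
  `|hyers_seq f n.+1 x - hyers_seq f n x| <= 2^-1 * Phi phi x * L ^+ n.
Proof.
have -> : hyers_seq f n.+1 x - hyers_seq f n x
    = (2 ^+ n.+1)^-1 *: (f (2 *: (2 ^+ n *: x)) - 2 *: f (2 ^+ n *: x)).
  rewrite /hyers_seq scalerBr !scalerA -exprS; congr (_ - _ *: _).
  by rewrite exprS invfM mulrAC mulVf ?mul1r ?pnatr_eq0.
rewrite normrZ ger0_norm ?invr_ge0 ?exprn_ge0 //.
apply: le_trans (ler_wpM2l _ (le_trans (f_double_dist_le _) (Phi_scale2n n x))) _.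
  by rewrite invr_ge0 exprn_ge0.
by rewrite exprS exprMn invfM -!mulrA (mulKf (pow2_neq0 n)) [L ^+ n * _]mulrC.
Qed.

Lemma hyers_seq_cvg x : hyers_seq f ^~ x @ \oo --> hyers_lim f x.
Proof.
exact: (geometric_cauchy_cvg (u := hyers_seq f ^~ x) L_ge0 L_lt1 (hyers_seq_step ^~ x)).
Qed.

Lemma f_sub_hyers_lim_le x : `|f x - hyers_lim f x| <= (2 - 2 * L)^-1 * Phi phi x.
Proof.
have := geometric_lim_dist_le (u := hyers_seq f ^~ x) L_ge0 L_lt1 (hyers_seq_step ^~ x).
rewrite /hyers_seq expr0 invr1 !scale1r => /le_trans; apply.
rewrite le_eqVlt; apply/orP; left; apply/eqP; field.
by apply/andP; split; apply: lt0r_neq0; move: L_lt1; lra.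
Qed.

Lemma hyers_lim0 : hyers_lim f 0 = 0.
Proof.
apply: cvg_lim => //; under eq_cvg do rewrite /hyers_seq scaler0 f0 scaler0.
exact: cvg_cst.
Qed.

Lemma hyers_lim_double x : hyers_lim f (2 *: x) = 2 *: hyers_lim f x.
Proof.
apply: cvg_lim => //.
have -> : hyers_seq f ^~ (2 *: x) = fun n => 2 *: hyers_seq f n.+1 x.
  apply/funext => n; rewrite /hyers_seq !scalerA -exprSr; congr (_ *: _).
  by rewrite exprSr invfM mulrCA mulfV ?mulr1 ?pnatr_eq0.
apply: cvgZ; first exact: cvg_cst.
by have := hyers_seq_cvg x; rewrite -cvg_shiftS.
Qed.

Lemma hyers_seq_eqn n x y :
  `|eqn_defect (hyers_seq f n) x y| <= phi x y * L ^+ n.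
Proof.
have comm (c : R) (v : X) : c *: (2 ^+ n *: v) = 2 ^+ n *: (c *: v).
  by rewrite !scalerA mulrC.
have -> : eqn_defect (hyers_seq f n) x y
    = (2 ^+ n)^-1 *: eqn_defect f (2 ^+ n *: x) (2 ^+ n *: y).
  by rewrite /eqn_defect /hyers_seq !scalerDr -!comm !scalerN.
rewrite normrZ ger0_norm ?invr_ge0 ?exprn_ge0 //.
apply: le_trans (ler_wpM2l _ (le_trans (f_eqn _ _) (phi_scale2n n x y))) _.
  by rewrite invr_ge0 exprn_ge0.
by rewrite exprMn -mulrA (mulKf (pow2_neq0 n)) mulrC.
Qed.

Lemma hyers_lim_eqn x y : eqn_defect (hyers_lim f) x y = 0.
Proof.
apply: (lim_norm_le_null _ (hyers_seq_eqn ^~ x ^~ y)).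
  by apply: cvgB; [apply: cvgB; [apply: cvgD|]|]; exact: hyers_seq_cvg.
rewrite -(mulr0 (phi x y)); apply: cvgM; first exact: cvg_cst.
by apply: cvg_expr; rewrite ger0_norm.
Qed.

Lemma hyers_lim_additive : {morph hyers_lim f : a b / a + b}.
Proof. exact: defect0_additive hyers_lim0 hyers_lim_double hyers_lim_eqn. Qed.

Hypotheses (mulP : banach_algebra_mul mul)
  (f_jordan : forall x y, `|jordan_defect mul f x y| <= psi x y)
  (psi_lim : forall x y,
    (fun k => (8 ^+ k)^-1 * psi (2 ^+ k *: x) (2 ^+ k *: y)) @ \oo --> 0).

Lemma hyers_seq_jordan k x y :
  `|hyers_seq f (3 * k) (mul (mul x y) x) - mul (mul (hyers_seq f k x) y) x
    - mul (mul x (hyers_seq f k y)) x - mul (mul x y) (hyers_seq f k x)|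
  <= (8 ^+ k)^-1 * psi (2 ^+ k *: x) (2 ^+ k *: y).
Proof.
have pow3 : 2 ^+ (3 * k) = (2 ^+ k) ^+ 3 :> R by rewrite mulnC exprM.
have cube : (2 ^+ k) ^+ 3 = 8 ^+ k :> R by rewrite -pow3 exprM -natrX.
rewrite /hyers_seq pow3 (jordan_defect_rescale mulP f _ x y (pow2_neq0 k)) normrZ cube.
rewrite ger0_norm ?invr_ge0 ?exprn_ge0 //.
by apply: ler_wpM2l; [rewrite invr_ge0 exprn_ge0 | exact: f_jordan].
Qed.

Lemma hyers_lim_jordan x y :
  hyers_lim f (mul (mul x y) x) = mul (mul (hyers_lim f x) y) x
    + mul (mul x (hyers_lim f y)) x + mul (mul x y) (hyers_lim f x).
Proof.
apply/eqP; rewrite -subr_eq0 !opprD !addrA; apply/eqP.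
apply: (lim_norm_le_null _ (hyers_seq_jordan ^~ x ^~ y) (psi_lim x y)).
apply: cvgB; [apply: cvgB; [apply: cvgB|]|].
- by apply: cvg_subseq (hyers_seq_cvg _) => k; rewrite leq_pmull.
- by apply: (cvg_mull mulP); apply: (cvg_mull mulP); exact: hyers_seq_cvg.
- by apply: (cvg_mull mulP); apply: (cvg_mulr mulP); exact: hyers_seq_cvg.
- by apply: (cvg_mulr mulP); exact: hyers_seq_cvg.
Qed.

Lemma hyers_lim_unique [H : X -> X] : {morph H : a b / a + b} ->
  (forall x, `|f x - H x| <= (2 - 2 * L)^-1 * Phi phi x) -> H = hyers_lim f.
Proof.
move=> H_add H_near; pose c := (2 - 2 * L)^-1.
have c_ge0 : 0 <= c by rewrite invr_ge0; move: L_lt1; lra.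
apply: (additive_eq_of_dist_le (K := fun x => 2 * (c * Phi phi x)) H_add
  hyers_lim_additive L_ge0 L_lt1) => [x|n x].
  have -> : H x - hyers_lim f x = (f x - hyers_lim f x) - (f x - H x).
    by rewrite opprB [RHS]addrC addrA subrK.
  apply: le_trans (ler_normB _ _) _; rewrite mulr_natl mulr2n.
  exact: lerD (f_sub_hyers_lim_le x) (H_near x).
by have := ler_wpM2l c_ge0 (Phi_scale2n n x); lra.
Qed.

End HyersApproximation.

Theorem theorem2p6 (R : realType) (X : completeNormedModType R)
  (mul : X -> X -> X) (phi psi : X -> X -> R) (f : X -> X) (L : R) :
  banach_algebra_mul mul ->
  (forall x y, 0 <= phi x y) -> (forall x y, 0 <= psi x y) ->
  f 0 = 0 ->
  (forall x y, `|f (mul (mul x y) x) - mul (mul (f x) y) x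
                 - mul (mul x (f y)) x - mul (mul x y) (f x)| <= psi x y) ->
  (forall x y, `|f (2%:R *: x + y) + f (x + 2%:R *: y)
                 - f (3%:R *: x) - f (3%:R *: y)| <= phi x y) ->
  0 < L -> L < 1 ->
  (forall x y, 2%:R^-1 * phi (2%:R *: x) (2%:R *: y) <= L * phi x y) ->
  (forall x y, (fun k : nat => (8%:R ^+ k)^-1 *
                  psi ((2%:R ^+ k) *: x) ((2%:R ^+ k) *: y)) @ \oo --> (0 : R)) ->
  let Phi := fun x : X =>
    phi (2%:R^-1 *: x) 0 + phi (- (2%:R^-1) *: x) 0
    + phi (2%:R^-1 *: x) (- (2%:R^-1) *: x)
    + phi (- (3%:R^-1) *: x) ((2%:R / 3%:R) *: x) in
  exists H : X -> X,
    [/\ jordan_triple_derivation mul H,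
        (forall x, `|f x - H x| <= (2%:R - 2%:R * L)^-1 * Phi x)
      & (forall H' : X -> X, jordan_triple_derivation mul H' ->
          (forall x, `|f x - H' x| <= (2%:R - 2%:R * L)^-1 * Phi x) ->
          H' = H)].
Proof.
(* The nonnegativity of phi and psi follows from the two defect bounds. *)
move=> mulP _ _ f0 f_jordan f_eqn L_gt0 L_lt1 phi_double psi_lim Phi.
have L_ge0 := ltW L_gt0.
exists (hyers_lim f); split.
- split; first exact: (hyers_lim_additive f0 L_ge0 L_lt1 f_eqn phi_double).
  exact: (hyers_lim_jordan f0 L_ge0 L_lt1 f_eqn phi_double mulP f_jordan psi_lim).
- exact: (f_sub_hyers_lim_le f0 L_ge0 L_lt1 f_eqn phi_double).
- move=> H [H_add _]; exact: (hyers_lim_unique f0 L_ge0 L_lt1 f_eqn phi_double H_add).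
Qed.
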